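(* Every special generalized crown has, as a retract, a special generalized crown that has no irreducible elements.
   Context: All posets are finite. A subset $Q\subseteq P$ (with induced order) is a retract of $P$ if there is an order-preserving map $f:P\to Q$ with $f(q)=q$ for all $q\in Q$. For $p,q\in P$, $p$ is a lower cover of $q$ (and $q$ an upper cover of $p$) if $p<q$ and there is no $r$ with $p<r<q$. An element is irreducible if it has exactly one upper cover or exactly one lower cover. Let $A=(a_0,\dots,a_{m-1})$ and $B=(b_0,\dots,b_{n-1})$ be disjoint antichains in a poset, each equipped with a cyclic ordering given by the indexing, with $m,n\ge 2$. The subposet $A\cup B$ is circulant with bipartition $\{A,B\}$ if every strict comparability in $A\cup B$ is between an element of $A$ and an element of $B$, and the map sending $a_i\mapsto a_{i+1 \bmod m}$ and $b_j\mapsto b_{j+1\bmod n}$ is order-preserving on $A\cup B$. A poset $P$ is a generalized crown with $k$-partition $\{A_0,\dots,A_{k-1}\}$ if $P$ is partitioned into cyclically ordered antichains $A_0,\dots,A_{k-1}$, each with at least two elements, such that for all $0\le i<j\le k-1$ the subposet $A_i\cup A_j$ is circulant with bipartition $\{A_i,A_j\}$. Such a generalized crown is special if it admits an automorphism whose orbits are exactly the sets $A_0,\dots,A_{k-1}$. *)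

From HB Require Import structures.
From mathcomp Require Import all_boot all_order.
Set Implicit Arguments. Unset Strict Implicit. Unset Printing Implicit Defensive.
Import Order.Theory.
Local Open Scope order_scope.

(* Finite posets: a finite poset is a finPOrderType T; subposets are sets
   S : {set T} with the induced order. *)
Section Crowns.
Context {d : Order.disp_t} {T : finPOrderType d}.

Definition retract (S Q : {set T}) : Prop :=
  Q \subset S /\
  exists f : T -> T,
    [/\ forall x, x \in S -> f x \in Q,
        forall x y, x \in S -> y \in S -> x <= y -> f x <= f y
      & forall q, q \in Q -> f q = q].

Definition lower_cover (S : {set T}) (p q : T) : bool :=
  [&& p \in S, q \in S, p < q & [forall r, ~~ [&& r \in S, p < r & r < q]]].

Definition upper_covers (S : {set T}) (x : T) : {set T} :=
  [set y in S | lower_cover S x y].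
Definition lower_covers (S : {set T}) (x : T) : {set T} :=
  [set y in S | lower_cover S y x].

Definition irreducible (S : {set T}) (x : T) : bool :=
  (#|upper_covers S x| == 1%N) || (#|lower_covers S x| == 1%N).

(* a sequence (with its cyclic ordering by index) is a cyclically ordered
   antichain with at least two elements *)
Definition cyc_antichain (A : seq T) : Prop :=
  [/\ uniq A, (2 <= size A)%N &
      forall x y, x \in A -> y \in A -> x <= y -> x = y].

(* A u B circulant with bipartition {A, B}; the shift map a_i |-> a_{i+1 mod m}
   is [next A] (path.v), likewise for B. *)
Definition circulant (A B : seq T) : Prop :=
  (forall x y, x \in A ++ B -> y \in A ++ B -> x < y ->
     (x \in A) && (y \in B) || (x \in B) && (y \in A)) /\
  (let sh x := if x \in A then next A x else next B x in
   forall x y, x \in A ++ B -> y \in A ++ B -> x <= y -> sh x <= sh y).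

Definition gen_crown (S : {set T}) (k : nat) (A : 'I_k -> seq T) : Prop :=
  [/\ forall i, cyc_antichain (A i),
      forall i j x, i != j -> x \in A i -> x \notin A j,
      forall x, x \in S <-> exists i, x \in A i
    & forall i j : 'I_k, (i < j)%N -> circulant (A i) (A j)].

Definition automorphism (S : {set T}) (g : T -> T) : Prop :=
  [/\ forall x, x \in S -> g x \in S,
      {in S &, injective g}
    & forall x y, x \in S -> y \in S -> (x <= y) = (g x <= g y)].

Definition special_gen_crown (S : {set T}) : Prop :=
  exists k (A : 'I_k -> seq T), gen_crown S A /\
    exists g : T -> T, automorphism S g /\
      forall i x, x \in A i -> forall y, fconnect g x y = (y \in A i).

End Crowns.

From HB Require Import structures.
From mathcomp Require Import all_boot all_order.
Set Implicit Arguments. Unset Strict Implicit. Unset Printing Implicit Defensive.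
Import Order.Theory.
Local Open Scope order_scope.

(* If x is irreducible in a special generalized crown S, the automorphism
   carries x to every element of its block A_i, so either every element of
   A_i has a unique upper cover or every element has a unique lower cover.
   As A_i is an antichain, sending each of its elements to that cover and
   fixing the rest of S is an order-preserving retraction onto S \ A_i, which
   is again a special generalized crown: keep the other blocks and the same
   automorphism.  Repeat until no irreducible element is left. *)

Section Retracts.
Context {d : Order.disp_t} {T : finPOrderType d}.
Implicit Types (S P Q : {set T}) (x y : T).

Lemma retract_refl S : retract S S.
Proof. by split=> //; exists id. Qed.

Lemma retract_trans S Q1 Q2 : retract S Q1 -> retract Q1 Q2 -> retract S Q2.
Proof.
move=> [sQ1 [f1 [f1Q f1le f1id]]] [sQ2 [f2 [f2Q f2le f2id]]].
split; first exact: subset_trans sQ2 sQ1.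
exists (f2 \o f1); split=> /= [x xS|x y xS yS xy|q qQ2].
- exact/f2Q/f1Q.
- by apply: f2le; [apply: f1Q | apply: f1Q | apply: f1le].
- by rewrite f1id ?f2id // (subsetP sQ2).
Qed.

(* An element of ]x, y] with the fewest elements of ]x, y] below it is minimal
   there, hence covers x. *)
Lemma exists_upper_cover S x y : x \in S -> y \in S -> x < y ->
  exists2 c, lower_cover S x c & c <= y.
Proof.
move=> xS yS xy; pose B := [set r in S | x < r <= y].
have yB : y \in B by rewrite inE yS xy lexx.
case: (arg_minnP (fun r => #|[set z in B | z < r]|) yB) => c cB cmin.
have /[!inE] /and3P [cS xc cy] : c \in B := cB; exists c => //.
rewrite /lower_cover xS cS xc; apply/forallP => r; apply/negP => /and3P [rS xr rc].
have rB : r \in B by rewrite inE rS xr (le_trans (ltW rc) cy).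
have := cmin r rB; rewrite leqNgt => /negP; apply; apply: proper_card.
apply/properP; split.
  by apply/subsetP => z; rewrite !inE => /andP [-> zr]; apply: lt_trans zr rc.
by exists r; rewrite !inE ?ltxx ?andbF // rS xr rc (le_trans (ltW rc) cy).
Qed.

Lemma retract_setD_antichain_upper S P :
  P \subset S -> {in P &, forall a b, a <= b -> a = b} ->
  {in P, forall a, #|upper_covers S a| = 1%N} -> retract S (S :\: P).
Proof.
move=> PS antiP covP; pose h a := odflt a [pick c in upper_covers S a].
have h_cover a c : a \in P -> lower_cover S a c = (c == h a).
  move=> aP; have /cards1P [c0 Ec0] : #|upper_covers S a| == 1%N by rewrite covP.
  have -> : h a = c0.
    by rewrite /h; case: pickP => [z|/(_ c0)]; rewrite Ec0 ?set11 // in_set1 => /eqP.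
  rewrite -in_set1 -Ec0 inE; apply/idP/andP => [cov|[] //].
  by split=> //; case/and4P: cov.
have lt_h a : a \in P -> a < h a.
  by move=> aP; have /and4P [] : lower_cover S a (h a) by rewrite h_cover.
have h_S a : a \in P -> h a \in S.
  by move=> aP; have /and4P [] : lower_cover S a (h a) by rewrite h_cover.
have h_notin a : a \in P -> h a \notin P.
  move=> aP; apply: contraTN (lt_h a aP) => haP.
  by rewrite -(antiP _ _ aP haP (ltW (lt_h a aP))) ltxx.
split; first exact: subsetDl.
exists (fun y => if y \in P then h y else y); split.
- by move=> y yS; case: (boolP (y \in P)) => yP; rewrite inE ?h_notin ?h_S ?yP.
- move=> a b aS bS ab; case: (boolP (a \in P)) => aP; case: (boolP (b \in P)) => bP.
  + by rewrite (antiP a b aP bP ab).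
  + have ab' : a < b by rewrite lt_neqAle ab andbT; apply: contraNneq bP => <-.
    have [c cov cb] := exists_upper_cover aS bS ab'.
    by move: cov; rewrite h_cover // => /eqP <-.
  + exact: le_trans ab (ltW (lt_h b bP)).
  + exact: ab.
- by move=> q /setDP [_ /negPf ->].
Qed.

Lemma lower_cover_dual S p q : @lower_cover _ T^d S p q = lower_cover S q p.
Proof.
rewrite /lower_cover andbCA; do 3 congr andb; apply: eq_forallb => r.
by case: (r \in S); rewrite ?andbF //= andbC.
Qed.

Lemma upper_covers_dual S x : @upper_covers _ T^d S x = lower_covers S x.
Proof. by apply/setP => y; rewrite !inE lower_cover_dual. Qed.

Lemma retract_dual S Q : @retract _ T^d S Q -> retract S Q.
Proof.
move=> [QS [f [fQ fle fid]]]; split=> //.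
by exists f; split=> // x y xS yS xy; apply: fle.
Qed.

End Retracts.

Lemma retract_setD_antichain_lower (d : Order.disp_t) (T : finPOrderType d)
    (S P : {set T}) :
  P \subset S -> {in P &, forall a b, a <= b -> a = b} ->
  {in P, forall a, #|lower_covers S a| = 1%N} -> retract S (S :\: P).
Proof.
move=> PS antiP covP; apply: retract_dual.
apply: (@retract_setD_antichain_upper _ T^d) => // [a b aP bP ba|a aP].
- exact: esym (antiP b a bP aP ba).
- by rewrite upper_covers_dual covP.
Qed.

Section Automorphism.
Context {d : Order.disp_t} {T : finPOrderType d}.
Variables (S : {set T}) (g : T -> T).
Hypothesis autg : automorphism S g.

Let g_in x : x \in S -> g x \in S. Proof. by case: autg => gS _ _; apply: gS. Qed.

Lemma aut_imset : g @: S = S.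
Proof.
have [_ ginj _] := autg; apply/eqP; rewrite eqEcard card_in_imset // leqnn andbT.
by apply/subsetP => _ /imsetP [z zS ->]; apply: g_in.
Qed.

Lemma aut_lt x y : x \in S -> y \in S -> (g x < g y) = (x < y).
Proof.
have [_ ginj gle] := autg; move=> xS yS; rewrite !lt_neqAle -gle //.
by rewrite (inj_in_eq ginj).
Qed.

Lemma aut_lower_cover p q : lower_cover S p q -> lower_cover S (g p) (g q).
Proof.
case/and4P=> pS qS pq /forallP noneP.
rewrite /lower_cover !g_in // aut_lt // pq; apply/forallP => r.
apply/negP => /and3P [rS pr rq]; move: rS pr rq; rewrite -aut_imset.
case/imsetP=> r0 r0S ->; rewrite !aut_lt // => pr0 r0q.
by have := noneP r0; rewrite r0S pr0 r0q.
Qed.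

Lemma leq_card_rel_fconnect (R : rel T) x y :
  {in S &, forall a b, R a b -> R (g a) (g b)} -> x \in S -> fconnect g x y ->
  (#|[set z in S | R x z]| <= #|[set z in S | R y z]|)%N.
Proof.
have [_ ginj _] := autg; move=> Rg xS /iter_findex <-.
have iter_in n : iter n g x \in S by elim: n => //= n; apply: g_in.
elim: (findex g x y) => //= n IH; apply: leq_trans IH _.
set D := [set z in S | R _ z]; rewrite -(card_in_imset (f := g) (D := D)).
  apply: subset_leq_card; apply/subsetP => w /imsetP [z].
  by rewrite !inE => /andP [zS Rz] ->; rewrite g_in // Rg.
by move=> a b; rewrite !inE => /andP [aS _] /andP [bS _]; apply: ginj.
Qed.

End Automorphism.

Section SpecialCrown.
Context {d : Order.disp_t} {T : finPOrderType d}.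
Variables (S : {set T}) (k : nat) (A : 'I_k -> seq T) (g : T -> T).
Hypotheses (crownA : gen_crown S A) (autg : automorphism S g).
Hypothesis orbitA : forall i x, x \in A i -> forall y, fconnect g x y = (y \in A i).

Lemma block_sub i : [set z | z \in A i] \subset S.
Proof.
have [_ _ memA _] := crownA.
by apply/subsetP => z; rewrite inE => zA; apply/memA; exists i.
Qed.

Lemma block_antichain i : {in [set z | z \in A i] &, forall a b, a <= b -> a = b}.
Proof.
have [acA _ _ _] := crownA; have [_ _ anti] := acA i.
by move=> a b; rewrite !inE; apply: anti.
Qed.

Lemma card_covers_block i x y : x \in A i -> y \in A i ->
  #|upper_covers S y| = #|upper_covers S x| /\
  #|lower_covers S y| = #|lower_covers S x|.
Proof.
move=> xA yA; have inS z : z \in A i -> z \in S.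
  by move=> zA; apply: (subsetP (block_sub i)); rewrite inE.
have card_le (R : rel T) a b : {in S &, forall u v, R u v -> R (g u) (g v)} ->
    a \in A i -> b \in A i -> (#|[set z in S | R a z]| <= #|[set z in S | R b z]|)%N.
  move=> Rg aA bA; apply: (leq_card_rel_fconnect autg Rg (inS a aA)).
  by rewrite (orbitA aA).
rewrite /upper_covers /lower_covers; split; apply/eqP; rewrite eqn_leq; apply/andP.
- by split; apply: (card_le (lower_cover S)) => // u v _ _; apply: aut_lower_cover.
- split; apply: (card_le (fun u v => lower_cover S v u)) => // u v _ _.
  all: exact: aut_lower_cover.
Qed.

Lemma special_gen_crown_setD_block i :
  special_gen_crown (S :\: [set z | z \in A i]).
Proof.
have [acA disjA memA circA] := crownA; have [gS ginj gle] := autg.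
have g_block j z : z \in A j -> g z \in A j.
  by move=> zA; rewrite -(orbitA zA) fconnect1.
exists k.-1, (fun j => A (lift i j)); split; last first.
  exists g; split=> [|j z zA]; last exact: orbitA.
  split=> [z|a b /setDP [aS _] /setDP [bS _]|a b /setDP [aS _] /setDP [bS _]].
  - rewrite !inE => /andP [zNi zS]; rewrite gS // andbT.
    have [j zA] := (memA z).1 zS; apply: contra zNi => gzA.
    case: (eqVneq j i) => [<- // | ji].
    by move: (disjA _ _ _ ji (g_block _ _ zA)); rewrite gzA.
  - exact: ginj.
  - exact: gle.
split=> [j | j j' z | z | j j' lt_jj'].
- exact: acA.
- by move=> ne; apply: disjA; rewrite (inj_eq (@lift_inj _ i)).
- rewrite !inE; split=> [/andP [zNi zS] | [j zA]].
    have [j zA] := (memA z).1 zS; case: (unliftP i j) => [j' ej | ej].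
      by exists j'; rewrite -ej.
    by case/negP: zNi; rewrite -ej.
  rewrite (memA z).2 ?andbT; last by exists (lift i j).
  by apply: (disjA _ _ _ _ zA); rewrite eq_sym neq_lift.
- by apply: circA; rewrite /= ltnNge leq_bump2 -ltnNge.
Qed.

Lemma retract_setD_block i x : x \in A i -> irreducible S x ->
  retract S (S :\: [set z | z \in A i]).
Proof.
move=> xA /orP [] /eqP covx.
- apply: (retract_setD_antichain_upper (block_sub i) (block_antichain (i := i))).
  by move=> y; rewrite inE => yA; have [-> _] := card_covers_block xA yA.
- apply: (retract_setD_antichain_lower (block_sub i) (block_antichain (i := i))).
  by move=> y; rewrite inE => yA; have [_ ->] := card_covers_block xA yA.
Qed.

End SpecialCrown.

Lemma special_gen_crown_retract_smaller (d : Order.disp_t) (T : finPOrderType d)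
    (S : {set T}) x :
  special_gen_crown S -> x \in S -> irreducible S x ->
  exists Q : {set T}, [/\ retract S Q, special_gen_crown Q & (#|Q| < #|S|)%N].
Proof.
move=> [k [A [crownA [g [autg orbitA]]]]] xS irrx.
have [_ _ memA _] := crownA; have [i xA] := (memA x).1 xS.
exists (S :\: [set z | z \in A i]); split.
- exact: (retract_setD_block crownA autg orbitA xA irrx).
- exact: (special_gen_crown_setD_block crownA autg orbitA i).
- apply: proper_card; apply/properP; split; first exact: subsetDl.
  by exists x; rewrite // !inE xA.
Qed.

Lemma retract_special_gen_crown_irreducible_free (d : Order.disp_t)
    (T : finPOrderType d) (S : {set T}) :
  special_gen_crown S ->
  exists Q : {set T},
    [/\ retract S Q, special_gen_crown Q & forall x, x \in Q -> ~~ irreducible Q x].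
Proof.
have [n] := ubnP #|S|; elim: n S => [//|n IH] S ltSn crownS.
case: (boolP [exists x in S, irreducible S x]) => [/exists_inP [x xS irrx] | noirr].
  have [Q1 [SQ1 crownQ1 ltQ1]] := special_gen_crown_retract_smaller crownS xS irrx.
  have [Q [Q1Q crownQ irrQ]] := IH Q1 (leq_ltn_trans ltQ1 ltSn) crownQ1.
  by exists Q; split=> //; apply: retract_trans SQ1 Q1Q.
exists S; split=> //; first exact: retract_refl.
by move=> x xS; apply: contra noirr => irrx; apply/exists_inP; exists x.
Qed.

Theorem lemma3p4 (d : Order.disp_t) (T : finPOrderType d) :
  special_gen_crown [set: T] ->
  exists Q : {set T},
    [/\ retract [set: T] Q, special_gen_crown Q &
        forall x, x \in Q -> ~~ irreducible Q x].
Proof. exact: retract_special_gen_crown_irreducible_free. Qed.
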